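(* Let $b\geq 3$ and $h=\left\lceil\frac{(b-1)^2+1}{2}\right\rceil$. Then the zero entries of the Boolean matrix $(W_b)^{h-1}(W_b^t)^{h-1}$ occur only in the $(b,\lfloor \frac{b}{2}\rfloor)$ and $(\lfloor \frac{b}{2}\rfloor, b)$ positions.
   Context: Matrix products are Boolean ($1+1=1$). For $b\geq 3$, $W_b$ is the $b\times b$ $(0,1)$-matrix whose entries equal to $1$ are exactly those in positions $(i,i+1)$ for $1\leq i\leq b-1$, together with positions $(b-1,1)$ and $(b,1)$; all other entries are $0$. (Its digraph is the Wielandt graph: the cycle $1\to 2\to\cdots\to b\to 1$ plus the arc $b-1\to 1$.) $W_b^t$ denotes the transpose. *)

From mathcomp Require Import all_boot.
Unset Printing Implicit Defensive.

(* Boolean (0,1)-matrices of size n x n, indexed by 'I_n; index i : 'I_n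
   stands for the paper's 1-based index i+1. *)
Definition bmat (n : nat) := 'I_n -> 'I_n -> bool.

Definition bmul n (A B : bmat n) : bmat n :=
  fun i j => [exists k : 'I_n, A i k && B k j].

Definition bid (n : nat) : bmat n := fun i j => i == j.

Definition bpow n (A : bmat n) (k : nat) : bmat n := iter k (@bmul n A) (@bid n).

Definition btr n (A : bmat n) : bmat n := fun i j => A j i.

(* Wielandt matrix W_b: ones exactly at (i, i+1) for 1 <= i <= b-1,
   and at (b-1, 1) and (b, 1) (1-based positions). *)
Definition W (b : nat) : bmat b :=
  fun i j => (j.+1 == i.+2) || ((j.+1 == 1) && ((i.+1 == b.-1) || (i.+1 == b))).
Arguments bmul {n}. Arguments bpow {n}. Arguments btr {n}.

From mathcomp Require Import all_boot.
From mathcomp Require Import zify.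

Set Implicit Arguments.
Unset Strict Implicit.

(* Entry (x, y) of A^m (A^t)^m is 1 iff x and y have a common m-step
   successor.  In the Wielandt graph, vertex 1 lies on two cycles, of lengths
   b - 1 and b, and every vertex reaches it; routing walks through it shows
   that a walk of length t from x to k exists for every t in a range of width
   about the number of cycles used.  For m = h - 1, i.e. 2c(c - 1) if b = 2c
   and 2c^2 if b = 2c + 1, an explicit common successor of x and y fits these
   ranges for every pair other than (c, b) and (b, c). *)

Section BooleanPowers.

Variables (n : nat) (A : bmat n).

Lemma bpowS t x y : bpow A t.+1 x y = [exists l, A x l && bpow A t l y].
Proof. by []. Qed.

Lemma bpow0 x y : bpow A 0 x y = (x == y).
Proof. by []. Qed.

Lemma bpowD s t x y z : bpow A s x y -> bpow A t y z -> bpow A (s + t) x z.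
Proof.
elim: s x => [|s IHs] x; first by rewrite bpow0 add0n => /eqP ->.
rewrite addSn !bpowS => /existsP[l /andP[Axl Hly]] Hyz.
by apply/existsP; exists l; rewrite Axl (IHs _ Hly Hyz).
Qed.

End BooleanPowers.

Lemma bpow_btr_of n (A : bmat n) t x y : bpow A t y x -> bpow (btr A) t x y.
Proof.
elim: t x y => [|t IHt] x y; first by rewrite !bpow0 eq_sym.
rewrite bpowS => /existsP[l /andP[Ayl Hlx]].
rewrite -addn1; apply: bpowD (IHt _ _ Hlx) _.
by rewrite bpowS; apply/existsP; exists y; rewrite /btr Ayl bpow0 eqxx.
Qed.

Lemma bpow_btr n (A : bmat n) t x y : bpow (btr A) t x y = bpow A t y x.
Proof.
by apply/idP/idP => [/(bpow_btr_of (A := btr A))|/bpow_btr_of].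
Qed.

Lemma bmul_bpow_btr n (A : bmat n) m x y :
  bmul (bpow A m) (bpow (btr A) m) x y = [exists k, bpow A m x k && bpow A m y k].
Proof. by apply: eq_existsb => k; rewrite bpow_btr. Qed.

Lemma sqr_double_div2 c : ((2 * c) ^ 2 + 1 + 1) %/ 2 - 1 = 2 * c * c.
Proof.
have -> : (2 * c) ^ 2 + 1 + 1 = (2 * c * c + 1) * 2 by nia.
by rewrite mulnK // addnK.
Qed.

Lemma sqr_double_pred_div2 c : 0 < c ->
  ((2 * c - 1) ^ 2 + 1 + 1) %/ 2 - 1 = 2 * c * (c - 1).
Proof.
move=> c_gt0; have -> : (2 * c - 1) ^ 2 + 1 + 1 = (2 * c * (c - 1) + 1) * 2 + 1.
  by case: c c_gt0 => // c _; lia.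
by rewrite divnMDl // divn_small // addn0 addnK.
Qed.

Section Wielandt.

Variable b : nat.

Lemma W_walk_up d (x y : 'I_b) : y = x + d :> nat -> bpow (W b) d x y.
Proof.
elim: d x => [|d IHd] x Hy; first by rewrite bpow0; apply/eqP/val_inj => /=; lia.
have Hx1 : x.+1 < b by have := ltn_ord y; lia.
rewrite bpowS; apply/existsP; exists (Ordinal Hx1).
by rewrite /W /= eqxx; apply: IHd => /=; lia.
Qed.

Hypothesis hb : 2 < b.

Lemma W_to_origin (x z : 'I_b) :
  z = 0 :> nat -> x = b - 2 :> nat \/ x = b - 1 :> nat -> W b x z.
Proof.
move=> z0 Hx; rewrite /W z0 eqxx /=.
by case: Hx => Hx; apply/orP; [left|right]; apply/eqP; lia.
Qed.

Lemma W_walk_to_origin_via (x z : 'I_b) e : z = 0 :> nat -> x <= e <= b - 1 ->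
  b - 2 <= e -> bpow (W b) (e - x + 1) x z.
Proof.
move=> z0 /andP[xe eb] be.
have He : e < b by lia.
apply: bpowD (W_walk_up (y := Ordinal He) _) _; first by rewrite /=; lia.
rewrite bpowS; apply/existsP; exists z; rewrite bpow0 eqxx andbT.
by apply: W_to_origin => //=; lia.
Qed.

Lemma W_closed_walks_origin (z : 'I_b) : z = 0 :> nat ->
  forall c y, y <= c -> bpow (W b) (c * (b - 1) + y) z z.
Proof.
move=> z0; elim=> [|c IHc] y yc.
  have -> : y = 0 by lia.
  by rewrite mul0n bpow0.
have [y0|y_gt0] := posnP y.
  have -> : c.+1 * (b - 1) + y = (b - 2 - z + 1) + (c * (b - 1) + 0).
    by rewrite mulSn; lia.
  by apply: bpowD (W_walk_to_origin_via _ _ _) (IHc _ _); lia.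
have -> : c.+1 * (b - 1) + y = (b - 1 - z + 1) + (c * (b - 1) + y.-1).
  by rewrite mulSn; lia.
by apply: bpowD (W_walk_to_origin_via _ _ _) (IHc _ _); lia.
Qed.

(* Walk to vertex 1 through vertex b - 1 or b, around c cycles of length
   b - 1 or b, then up to k in k steps; y counts the passages through b. *)
Lemma W_walk_through_origin l (x k : 'I_b) c y t : b = l.+1 ->
  y <= c.+1 -> (x = b - 1 :> nat -> 0 < y) ->
  t = b - 1 - x + c * l + y + k -> bpow (W b) t x k.
Proof.
move=> bl yc x_last ->.
have b_gt0 : 0 < b by lia.
pose z := Ordinal b_gt0.
have z0 : z = 0 :> nat by [].
have Hzk : bpow (W b) k z k by apply: W_walk_up.
have {bl} -> : l = b - 1 by lia.
have [y0|y_gt0] := posnP y.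
  have -> : b - 1 - x + c * (b - 1) + y + k = b - 2 - x + 1 + (c * (b - 1) + 0) + k.
    by have := ltn_ord x; lia.
  apply: bpowD _ Hzk; apply: bpowD (W_closed_walks_origin z0 (leq0n c)).
  by apply: W_walk_to_origin_via; have := ltn_ord x; lia.
have -> : b - 1 - x + c * (b - 1) + y + k = b - 1 - x + 1 + (c * (b - 1) + y.-1) + k.
  by have := ltn_ord x; lia.
apply: bpowD _ Hzk; apply: bpowD (W_closed_walks_origin z0 _) => //; last by lia.
by apply: W_walk_to_origin_via; have := ltn_ord x; lia.
Qed.

Notation common_target m x y :=
  [exists k, bpow (W b) m x k && bpow (W b) m y k].

Lemma W_common_target_even c (x y : 'I_b) : b = 2 * c -> x <= y ->
  ~ (x.+1 = c /\ y.+1 = b) -> common_target (2 * c * (c - 1)) x y.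
Proof.
move=> bc xy not_exc; have yb := ltn_ord y.
have [c' c_eq] : exists c', c = c'.+2 by exists c.-2; lia.
have -> : 2 * c * (c - 1) = 2 * c'.+2 * c'.+1 by rewrite c_eq; lia.
have bl : b = (2 * c'.+1 + 1).+1 by lia.
apply/existsP; case: (leqP (y - x) (c - 1)) => d_le.
- exists y; apply/andP; split.
    by apply: (W_walk_through_origin (c := c') (y := c - 1 - (y - x)) bl); lia.
  by apply: (W_walk_through_origin (c := c') (y := c - 1) bl); lia.
- exists x; apply/andP; split.
    by apply: (W_walk_through_origin (c := c') (y := c - 1) bl); lia.
  by apply: (W_walk_through_origin (c := c'.+1) (y := y - x - c) bl); lia.
Qed.

Lemma W_common_target_odd c (x y : 'I_b) : b = 2 * c + 1 -> x <= y ->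
  ~ (x.+1 = c /\ y.+1 = b) -> common_target (2 * c * c) x y.
Proof.
move=> bc xy not_exc; have yb := ltn_ord y.
have b2 : b - 2 < b by lia.
pose k := Ordinal b2.
have [c' c_eq] : exists c', c = c'.+1 by exists c.-1; lia.
apply/existsP; case: (leqP (y - x) c) => d_le.
  have bl : b = (2 * c'.+1).+1 by lia.
  have [x_last|x_lt] := eqVneq (x : nat) (b - 1).
    exists k; apply/andP; split.
      by apply: (W_walk_through_origin (c := c') (y := 1) bl); rewrite /=; lia.
    by apply: (W_walk_through_origin (c := c') (y := 1) bl); rewrite /=; lia.
  exists x; apply/andP; split.
    by apply: (W_walk_through_origin (c := c') (y := 0) bl); lia.
  by apply: (W_walk_through_origin (c := c') (y := y - x) bl); lia.
have [c'' c'_eq] : exists c'', c' = c''.+1 by exists c'.-1; lia.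
have bl : b = (2 * c''.+2).+1 by lia.
have [y_last|y_lt] := eqVneq (y : nat) (b - 1).
  exists k; apply/andP; split.
    by apply: (W_walk_through_origin (c := c'') (y := x + 1) bl); rewrite /=; lia.
  by apply: (W_walk_through_origin (c := c''.+1) (y := 1) bl); rewrite /=; lia.
exists y; apply/andP; split.
  by apply: (W_walk_through_origin (c := c'') (y := 2 * c - (y - x)) bl); lia.
by apply: (W_walk_through_origin (c := c''.+1) (y := 0) bl); lia.
Qed.

Lemma W_common_target (x y : 'I_b) : x <= y ->
  ~ (x.+1 = b %/ 2 /\ y.+1 = b) ->
  common_target (((b - 1) ^ 2 + 1 + 1) %/ 2 - 1) x y.
Proof.
rewrite divn2; have := odd_double_half b; rewrite -mul2n.
case: (odd b) => /= b_half.
  have -> : b - 1 = 2 * b./2 by lia.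
  by rewrite sqr_double_div2; apply: W_common_target_odd; lia.
have -> : b - 1 = 2 * b./2 - 1 by lia.
by rewrite sqr_double_pred_div2; [apply: W_common_target_even | ]; lia.
Qed.

End Wielandt.

Theorem lemma2p4 (b : nat) (hb : 3 <= b) :
  let h := ((b - 1) ^ 2 + 1 + 1) %/ 2 in
  let P := bmul (bpow (W b) (h - 1)) (bpow (btr (W b)) (h - 1)) in
  forall i j : 'I_b, P i j = false ->
    ((i.+1 == b) && (j.+1 == b %/ 2)) || ((i.+1 == b %/ 2) && (j.+1 == b)).
Proof.
move=> h P i j; rewrite /P bmul_bpow_btr => /negbT; apply: contraR => not_exc.
have [ij|ji] := leqP i j.
  by apply: W_common_target => // -[iE jE]; rewrite iE jE !eqxx orbT in not_exc.
rewrite (eq_existsb (fun k => andbC _ _)).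
by apply: W_common_target (ltnW ji) _ => // -[jE iE]; rewrite iE jE !eqxx in not_exc.
Qed.
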